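(* Let $kQ/I$ be a string algebra such that $Q$ has neither loops nor oriented cycles. Then there is a coloring $c$ of $Q$ such that $kQ/I_c$ is a gentle string algebra and $I_c\subseteq I$, so that the identity of $kQ$ induces an algebra epimorphism $kQ/I_c\to kQ/I$.
   Context: Paths are composed right to left ($ba$ means $a$ then $b$ when $ha=tb$). A string algebra is a finite-dimensional algebra $kQ/I$ with $I$ generated by paths, such that (a) each vertex is the head of at most 2 arrows and the tail of at most 2 arrows, and (b) for each arrow $b$ there is at most one arrow $a$ with $ta=hb$ and $ab\notin I$, and at most one arrow $c'$ with $hc'=tb$ and $bc'\notin I$. It is a gentle string algebra if moreover (c) for each arrow $b$ there is at most one arrow $a$ with $ta=hb$ and $ab\in I$ and at most one arrow $c'$ with $hc'=tb$ and $bc'\in I$, and (d) $I$ is generated by paths of length 2. A coloring of $Q$ is a map $c:Q_1\to S$ to a finite set such that each $c^{-1}(s)$ is the set of arrows of a single directed path; $I_c$ is the ideal generated by all $ba$ with $ha=tb$, $c(a)=c(b)$. *)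

(* Combinatorial model of monomial (path) ideals in kQ. *)
From mathcomp Require Import all_boot.
Set Implicit Arguments. Unset Strict Implicit. Unset Printing Implicit Defensive.

Section Quiver.
Variables (V A : finType) (hd tl : A -> V).

(* A (nonempty) path is the list of its arrows in order of traversal:
   [:: a1; a2; ...; an] means a1, then a2, ..., i.e. the product an ... a2 a1
   in the right-to-left convention; consecutive arrows satisfy hd a_i = tl a_(i+1).
   So the product  b a  (a then b, ha = tb) is the list [:: a; b]. *)
Definition qpath (p : seq A) : bool :=
  if p is a :: s then path (fun x y => hd x == tl y) a s else false.

Definition in_ideal (G : seq A -> Prop) (p : seq A) : Prop :=
  exists u v w, p = u ++ v ++ w /\ G v.

Definition path_gens (G : seq A -> Prop) : Prop := forall q, G q -> qpath q.

Definition fin_dim (G : seq A -> Prop) : Prop :=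
  exists N, forall p, qpath p -> N <= size p -> in_ideal G p.

Definition at_most_one (P : A -> Prop) : Prop :=
  forall a1 a2, P a1 -> P a2 -> a1 = a2.

Definition string_algebra (G : seq A -> Prop) : Prop :=
  [/\ path_gens G, fin_dim G,
      (forall v, #|[set a | hd a == v]| <= 2 /\ #|[set a | tl a == v]| <= 2) &
      (forall b,
         at_most_one (fun a => tl a = hd b /\ ~ in_ideal G [:: b; a]) /\
         at_most_one (fun c' => hd c' = tl b /\ ~ in_ideal G [:: c'; b]))].

Definition gentle_string_algebra (G : seq A -> Prop) : Prop :=
  [/\ string_algebra G,
      (forall b,
         at_most_one (fun a => tl a = hd b /\ in_ideal G [:: b; a]) /\
         at_most_one (fun c' => hd c' = tl b /\ in_ideal G [:: c'; b])) &
      (exists G2 : seq A -> Prop,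
         (forall q, G2 q -> qpath q /\ size q = 2) /\
         (forall p, qpath p -> (in_ideal G2 p <-> in_ideal G p)))].

Definition coloring (S : finType) (c : A -> S) : Prop :=
  forall s, (exists a, c a = s) ->
    exists p, qpath p /\ forall a, (a \in p) = (c a == s).

Definition Ic_gens (S : finType) (c : A -> S) (q : seq A) : Prop :=
  match q with
  | [:: a; b] => hd a = tl b /\ c a = c b
  | _ => False
  end.

Definition no_loops : Prop := forall a, hd a <> tl a.

Definition no_oriented_cycles : Prop :=
  forall a s, qpath (a :: s) -> hd (last a s) <> tl a.

End Quiver.

From mathcomp Require Import all_boot zify.
From Stdlib Require Import Classical.
Set Implicit Arguments. Unset Strict Implicit. Unset Printing Implicit Defensive.

(* Call a composable pair of arrows (x, y) whose path [:: x; y] lies in I a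
   zero relation.  At every vertex there are at most two arrows in and two out,
   and by the string condition each arrow composes to a zero relation with all
   but at most one of its partners; a Hall-type argument on this bipartite
   graph of size at most 2 x 2 yields a matching by zero relations that
   saturates every arrow having two partners.  Chaining the matched pairs
   partitions the arrows into directed paths, and we give each path its own
   color.  Acyclicity ensures that two composable arrows of the same path are
   consecutive on it, so I_c is generated exactly by the matched zero
   relations: hence I_c is contained in I, the matching property gives the
   gentle condition (c), and saturation gives the string condition (b). *)

Section InfixNth.
Variable T : Type.

Lemma size_drop_take (q : seq T) i j : i <= j < size q ->
  size (drop i (take j.+1 q)) = (j - i).+1.
Proof. by case/andP=> le_ij lt_jq; rewrite size_drop size_takel //; lia. Qed.

Lemma nth_drop_take (x0 : T) (q : seq T) i j k : i <= j -> k <= j - i ->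
  nth x0 (drop i (take j.+1 q)) k = nth x0 q (i + k).
Proof. by move=> le_ij le_k; rewrite nth_drop nth_take //; lia. Qed.

End InfixNth.

Section QuiverPaths.
Variables (V A : finType) (hd tl : A -> V).
Local Notation qpath := (qpath hd tl).

Lemma qpathP (x0 : A) q : qpath q <->
  0 < size q /\ forall i, i.+1 < size q -> hd (nth x0 q i) = tl (nth x0 q i.+1).
Proof.
case: q => [|a s] /=; first by split => // [[]].
split=> [/(pathP x0) adj | [_ adj]]; last by apply/(pathP x0) => i /adj ->.
by split=> // i /adj /eqP.
Qed.

Lemma qpath_cat_adj p1 x y p2 : qpath (p1 ++ x :: y :: p2) -> hd x = tl y.
Proof.
case: p1 => [|z p1] /=; first by case/andP => /eqP.
by rewrite cat_path => /andP [_] /= /and3P [_ /eqP].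
Qed.

Lemma qpath_cat p1 x y s : qpath (rcons p1 x) -> qpath (y :: s) -> hd x = tl y ->
  qpath (p1 ++ x :: y :: s).
Proof.
case: p1 => [|z p1] /=; first by move=> _ -> ->; rewrite eqxx.
by rewrite rcons_path cat_path /= => /andP [-> ->] -> ->; rewrite eqxx.
Qed.

Lemma qpath_infix (x0 : A) q i j : qpath q -> i <= j < size q ->
  qpath (drop i (take j.+1 q)).
Proof.
move=> /(qpathP x0) [_ adj] ij; apply/(qpathP x0); rewrite size_drop_take //.
have /andP [le_ij lt_jq] := ij; split=> // k lt_k.
by rewrite !nth_drop_take // ?addnS; [apply: adj | ..]; lia.
Qed.

Lemma qpath_nth_pred (x0 : A) q j : qpath q -> 0 < j < size q ->
  hd (nth x0 q j.-1) = tl (nth x0 q j).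
Proof.
move=> /(qpathP x0) [_ adj] /andP [j_gt0 lt_j].
by rewrite -{2}(prednK j_gt0) adj ?prednK.
Qed.

Lemma color_class_last (c : A -> A) (L : seq (A * A)) b : coloring hd tl c ->
  (forall x y, hd x = tl y -> c x = c y -> (x, y) \in L) -> b \notin map fst L ->
  exists s, qpath (rcons s b) /\ forall x, (x \in rcons s b) = (c x == c b).
Proof.
move=> col same_color b_nL; have [p [qP mem_p]] := col (c b) (ex_intro _ b erefl).
have b_p : b \in p by rewrite mem_p.
move: qP mem_p; case/splitPr: b_p => s [|y t] qP mem_p; first by exists s; rewrite -cats1.
have cyb : c b = c y by apply/esym/eqP; rewrite -mem_p mem_cat !inE eqxx !orbT.
by case/negP: b_nL; apply/mapP; exists (b, y); rewrite ?(same_color _ _ (qpath_cat_adj qP)).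
Qed.

Lemma color_class_head (c : A -> A) (L : seq (A * A)) a : coloring hd tl c ->
  (forall x y, hd x = tl y -> c x = c y -> (x, y) \in L) -> a \notin map snd L ->
  exists t, qpath (a :: t) /\ forall x, (x \in a :: t) = (c x == c a).
Proof.
move=> col same_color a_nL; have [p [qP mem_p]] := col (c a) (ex_intro _ a erefl).
have a_p : a \in p by rewrite mem_p.
move: qP mem_p; case/splitPr: a_p => s t; case/lastP: s => [|s z] qP mem_p.
  by exists t; split.
rewrite cat_rcons in qP mem_p.
have cza : c z = c a by apply/eqP; rewrite -mem_p mem_cat !inE eqxx !orbT.
by case/negP: a_nL; apply/mapP; exists (z, a); rewrite ?(same_color _ _ (qpath_cat_adj qP)).
Qed.

Section Acyclic.
Hypothesis acyclic : no_oriented_cycles hd tl.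

Lemma acyclic_no_loops : no_loops hd tl.
Proof. by move=> a; apply: (acyclic (s := [::])). Qed.

Lemma qpath_nth_hd_neq_tl (x0 : A) q i j : qpath q -> i <= j < size q ->
  hd (nth x0 q j) <> tl (nth x0 q i).
Proof.
move=> qP ij; have /andP [le_ij _] := ij; have := qpath_infix x0 qP ij.
have := @nth_drop_take _ x0 q i j; have := size_drop_take ij.
case: (drop i (take j.+1 q)) => [//|a s] [size_s] /(_ _ le_ij) nth_inf /acyclic.
rewrite -[last a s](nth_last x0 (a :: s)) /= size_s nth_inf // subnKC //.
by rewrite -[a]/(nth x0 (a :: s) 0) nth_inf ?addn0.
Qed.

Lemma qpath_nth_link (x0 : A) q i j : qpath q -> i < size q -> j < size q ->
  hd (nth x0 q i) = tl (nth x0 q j) -> j = i.+1.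
Proof.
move=> qP lt_i lt_j link; case: (ltngtP j i.+1) => // [le_ji | lt_ij].
  by case: (@qpath_nth_hd_neq_tl x0 q j i qP); first (apply/andP; lia).
case: (@qpath_nth_hd_neq_tl x0 q i.+1 j.-1 qP); first by apply/andP; lia.
rewrite (qpath_nth_pred _ qP) -?link; last by apply/andP; lia.
by have /(qpathP x0) [_ adj] := qP; apply: adj; lia.
Qed.

Lemma qpath_size_le_card p : qpath p -> size p <= #|V|.
Proof.
case: p => [//|x0 s] qP; rewrite -(size_map tl) -(card_uniqP _) ?max_card //.
have tl_neq i j : i < j < size (x0 :: s) ->
    tl (nth x0 (x0 :: s) i) != tl (nth x0 (x0 :: s) j).
  move=> /andP [lt_ij lt_j]; apply/eqP => eq_tl.
  have := @qpath_nth_pred x0 _ j qP; rewrite -eq_tl => /(_ ltac:(apply/andP; lia)).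
  by move/(qpath_nth_link qP) => /(_ ltac:(lia) ltac:(lia)); lia.
apply/(uniqP (tl x0)) => i j; rewrite !inE size_map => lt_i lt_j.
rewrite !(nth_map x0) //; case: (ltngtP i j) => // [lt_ij | lt_ji] /eqP.
  by rewrite (negbTE (tl_neq i j _)) //; lia.
by rewrite eq_sym (negbTE (tl_neq j i _)) //; lia.
Qed.

Lemma qpath_cat_hd_neq_tl s t x y : qpath (s ++ t) -> x \in s -> y \in t ->
  hd y <> tl x.
Proof.
move=> qP x_s y_t; have lt_x : index x s < size s by rewrite index_mem.
have lt_y : index y t < size t by rewrite index_mem.
have := @qpath_nth_hd_neq_tl x _ (index x s) (size s + index y t) qP.
rewrite !nth_cat lt_x (_ : size s + _ < size s = false) ?addKn ?nth_index //; last by lia.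
by apply; rewrite size_cat; apply/andP; lia.
Qed.

Lemma qpath_rcons_cat_link s b a t x y : qpath (rcons s b ++ a :: t) ->
  x \in rcons s b -> y \in a :: t -> hd x = tl y -> x = b /\ y = a.
Proof.
move=> qP x_sb y_at link.
have lt_x : index x (rcons s b) < (size s).+1 by rewrite -(size_rcons s b) index_mem.
have lt_y : index y (a :: t) < size (a :: t) by rewrite index_mem.
have := @qpath_nth_link x _ (index x (rcons s b)) ((size s).+1 + index y (a :: t)) qP.
rewrite !nth_cat size_rcons lt_x (_ : (size s).+1 + _ < (size s).+1 = false); last by lia.
rewrite addKn !nth_index // size_cat size_rcons => /(_ _ _ link) eq_pos.
have [ix iy] : index x (rcons s b) = size s /\ index y (a :: t) = 0.
  by have := eq_pos ltac:(lia) ltac:(lia); lia.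
split; first by rewrite -(nth_index b x_sb) ix nth_rcons ltnn eqxx.
by rewrite -(nth_index a y_at) iy.
Qed.

Lemma coloring_link (c : A -> A) (L : seq (A * A)) b a : coloring hd tl c ->
  (forall x y, hd x = tl y -> c x = c y <-> (x, y) \in L) ->
  hd b = tl a -> b \notin map fst L -> a \notin map snd L ->
  exists c' : A -> A, coloring hd tl c' /\
    forall x y, hd x = tl y -> c' x = c' y <-> (x, y) \in (b, a) :: L.
Proof.
move=> col same_color link b_nL a_nL.
have same_colorW x y : hd x = tl y -> c x = c y -> (x, y) \in L by move=> /same_color[].
have [s [qs mem_s]] := color_class_last col same_colorW b_nL.
have [t [qt mem_t]] := color_class_head col same_colorW a_nL.
have cba : c b != c a.
  by apply: contra b_nL => /eqP /(same_colorW _ _ link) baL; apply/mapP; exists (b, a).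
have qq : qpath (rcons s b ++ a :: t) by rewrite cat_rcons; apply: qpath_cat.
(* The class of [b] ends with [b] and that of [a] starts with [a]: recoloring
   the class of [a] with the color of [b] concatenates them into one path. *)
pose c' x := if c x == c a then c b else c x.
exists c'; split=> [_ [x <-] | x y xy].
  case: (eqVneq (c' x) (c b)) => [-> | c'xb].
    exists (rcons s b ++ a :: t); split=> // y; rewrite mem_cat mem_s mem_t /c'.
    by case: (c y =P c a) => [-> | _]; rewrite ?eqxx ?orbT ?orbF.
  have cxa : c x != c a by apply: contra c'xb; rewrite /c' => ->.
  rewrite /c' (negbTE cxa) in c'xb *.
  have [p [qp mem_p]] := col (c x) (ex_intro _ x erefl).
  exists p; split=> // y; rewrite mem_p.
  by case: (c y =P c a) => [-> | //]; rewrite eq_sym (negbTE cxa) eq_sym (negbTE c'xb).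
rewrite inE; split; last first.
  case/orP=> [/eqP [-> ->] | /(same_color _ _ xy) cxy]; rewrite /c' ?cxy //.
  by rewrite (negbTE cba) eqxx.
case: (eqVneq (c x) (c y)) => [/(same_color _ _ xy) -> _ | cxy]; first by rewrite orbT.
rewrite /c'; case: eqP => xa; case: eqP => ya.
- by rewrite xa ya eqxx in cxy.
- move=> cyb; have y_sb : y \in rcons s b by rewrite mem_s -cyb.
  have x_at : x \in a :: t by rewrite mem_t xa.
  by case: (qpath_cat_hd_neq_tl qq y_sb x_at).
- move=> cxb; have x_sb : x \in rcons s b by rewrite mem_s cxb.
  have y_at : y \in a :: t by rewrite mem_t ya.
  by have [-> ->] := qpath_rcons_cat_link qq x_sb y_at xy; rewrite eqxx.
- by move=> cxy'; rewrite cxy' eqxx in cxy.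
Qed.

Lemma coloring_of_matching (L : seq (A * A)) :
  (forall x y, (x, y) \in L -> hd x = tl y) ->
  {in L &, injective fst} -> {in L &, injective snd} ->
  exists c : A -> A, coloring hd tl c /\
    forall x y, hd x = tl y -> c x = c y <-> (x, y) \in L.
Proof.
move=> adjL fstL sndL; wlog uniqL : L adjL fstL sndL / uniq L => [wlog_uniq | ].
  have [||||c [col same_color]] := wlog_uniq (undup L); rewrite ?undup_uniq //.
  - by move=> x y; rewrite mem_undup; apply: adjL.
  - by move=> p q; rewrite !mem_undup; apply: fstL.
  - by move=> p q; rewrite !mem_undup; apply: sndL.
  by exists c; split=> // x y /same_color; rewrite mem_undup.
elim: L uniqL adjL fstL sndL => [_ _ _ _ | [b a] L IH /andP [baL uniqL] adjL fstL sndL].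
  exists id; split=> [_ [x <-] | x y xy]; first by exists [:: x]; split=> // y; rewrite inE.
  by split=> // eq_xy; case: (@acyclic_no_loops x); rewrite {2}eq_xy.
have [|||c [col same_color]] := IH uniqL.
- by move=> x y xyL; apply: adjL; rewrite inE xyL orbT.
- by move=> p q pL qL; apply: fstL; rewrite inE ?pL ?qL orbT.
- by move=> p q pL qL; apply: sndL; rewrite inE ?pL ?qL orbT.
apply: (coloring_link col same_color (adjL _ _ (mem_head _ _))).
  apply/mapP=> [[[b' y] byL /= eq_b]]; subst b'; case/negP: baL.
  by rewrite (fstL (b, a) (b, y)) // !inE ?eqxx ?byL ?orbT.
apply/mapP=> [[[x a'] xaL /= eq_a]]; subst a'; case/negP: baL.
by rewrite (sndL (b, a) (x, a)) // !inE ?eqxx ?xaL ?orbT.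
Qed.

End Acyclic.
End QuiverPaths.

Section SaturatingMatching.
Variable T : finType.
Implicit Types (X Y : {set T}) (R : T -> T -> Prop).

Lemma card_le2_mem X x1 x2 x : #|X| <= 2 ->
  x1 \in X -> x2 \in X -> x1 != x2 -> x \in X -> (x == x1) || (x == x2).
Proof.
move=> le2 x1X x2X n12 xX; apply/negPn/negP; rewrite negb_or => /andP [n1 n2].
have : #|x |: (x1 |: [set x2])| <= #|X|.
  by apply/subset_leq_card/subsetP => z; rewrite !inE => /or3P [] /eqP ->.
rewrite !cardsU1 cards1 !inE (negbTE n1) (negbTE n2) (negbTE n12) /=.
by move=> /leq_trans /(_ le2).
Qed.

Definition saturating_matching X Y R (M : seq (T * T)) : Prop := [/\
  forall x y, (x, y) \in M -> [/\ x \in X, y \in Y & R x y],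
  {in M &, injective fst}, {in M &, injective snd},
  forall x y1 y2, x \in X -> y1 \in Y -> y2 \in Y -> y1 != y2 -> x \in map fst M &
  forall y x1 x2, y \in Y -> x1 \in X -> x2 \in X -> x1 != x2 -> y \in map snd M].

Lemma saturating_matching_flip X Y R M : saturating_matching X Y R M ->
  saturating_matching Y X (fun y x => R x y) [seq (p.2, p.1) | p <- M].
Proof.
have flipK : cancel (fun p : T * T => (p.2, p.1)) (fun p => (p.2, p.1)) by case.
have mem_flip p : ((p.2, p.1) \in [seq (q.2, q.1) | q <- M]) = (p \in M).
  by rewrite mem_map //; apply: can_inj flipK.
have memM p : (p \in [seq (q.2, q.1) | q <- M]) = ((p.2, p.1) \in M).
  by rewrite -mem_flip; case: p.
case=> inM fstM sndM coverX coverY; split.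
- by move=> y x; rewrite memM => /inM [].
- move=> p q; rewrite !memM => pM qM eq_p.
  by apply: (can_inj flipK); apply: sndM.
- move=> p q; rewrite !memM => pM qM eq_p.
  by apply: (can_inj flipK); apply: fstM.
- by move=> y x1 x2 *; rewrite -map_comp; apply: (coverY y x1 x2).
- by move=> x y1 y2 *; rewrite -map_comp; apply: (coverX x y1 y2).
Qed.

Lemma saturating_matching_le1 X Y R : #|X| <= 1 ->
  (forall x y1 y2, x \in X -> y1 \in Y -> y2 \in Y -> y1 != y2 -> R x y1 \/ R x y2) ->
  exists M, saturating_matching X Y R M.
Proof.
move=> /card_le1_eqP eqX denseX.
case: (classic (exists x y, [/\ x \in X, y \in Y & R x y])) => [[x [y [xX yY Rxy]]] | noR].
  exists [:: (x, y)]; split.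
  - by move=> x' y'; rewrite inE => /eqP [-> ->].
  - by move=> p q; rewrite !inE => /eqP -> /eqP ->.
  - by move=> p q; rewrite !inE => /eqP -> /eqP ->.
  - by move=> x' y1 y2 x'X; rewrite (eqX x x') ?inE.
  - by move=> y' x1 x2 _ x1X x2X; rewrite (eqX x1 x2) ?eqxx.
exists [::]; split=> //.
- move=> x y1 y2 xX y1Y y2Y n12; case: noR.
  by case: (denseX x y1 y2) => // ?; [exists x, y1 | exists x, y2].
- by move=> y x1 x2 _ x1X x2X; rewrite (eqX x1 x2) ?eqxx.
Qed.

Lemma exists_saturating_matching X Y R : #|X| <= 2 -> #|Y| <= 2 ->
  (forall x y1 y2, x \in X -> y1 \in Y -> y2 \in Y -> y1 != y2 -> R x y1 \/ R x y2) ->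
  (forall y x1 x2, y \in Y -> x1 \in X -> x2 \in X -> x1 != x2 -> R x1 y \/ R x2 y) ->
  exists M, saturating_matching X Y R M.
Proof.
move=> le2X le2Y denseX denseY.
case: (leqP #|X| 1) => [le1X | /card_gt1P [x1 [x2 [x1X x2X nx]]]].
  exact: saturating_matching_le1.
case: (leqP #|Y| 1) => [le1Y | /card_gt1P [y1 [y2 [y1Y y2Y ny]]]].
  have [M /saturating_matching_flip satM] := saturating_matching_le1 le1Y denseY.
  by exists [seq (p.2, p.1) | p <- M].
wlog [R11 R22] : y1 y2 y1Y y2Y ny / R x1 y1 /\ R x2 y2 => [wlog_diag | ].
  case: (classic (R x1 y1 /\ R x2 y2)) => [diag | nd].
    exact: wlog_diag y1 y2 y1Y y2Y ny diag.
  apply: (wlog_diag y2 y1 y2Y y1Y); first by rewrite eq_sym.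
  have := denseX x1 y1 y2; have := denseX x2 y1 y2.
  have := denseY y1 x1 x2; have := denseY y2 x1 x2.
  tauto.
exists [:: (x1, y1); (x2, y2)]; split.
- by move=> x y; rewrite !inE => /orP [] /eqP [-> ->].
- move=> p q; rewrite !inE => /orP [] /eqP -> /orP [] /eqP -> //= eq12;
  by move: nx; rewrite eq12 eqxx.
- move=> p q; rewrite !inE => /orP [] /eqP -> /orP [] /eqP -> //= eq12;
  by move: ny; rewrite eq12 eqxx.
- by move=> x *; rewrite /= !inE; apply: (card_le2_mem le2X).
- by move=> y *; rewrite /= !inE; apply: (card_le2_mem le2Y).
Qed.

End SaturatingMatching.

Section Ideals.
Variable A : finType.
Implicit Type G : seq A -> Prop.

Lemma in_ideal_infix G u v w : in_ideal G v -> in_ideal G (u ++ v ++ w).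
Proof.
case=> u' [v' [w' [-> Gv']]]; exists (u ++ u'), v', (w' ++ w).
by rewrite -!catA.
Qed.

Lemma in_ideal_pair G x y : (forall q, G q -> 1 < size q) ->
  in_ideal G [:: x; y] <-> G [:: x; y].
Proof.
move=> long; split=> [[u [v [w [eq_xy Gv]]]] | Gxy]; last by exists [::], [:: x; y], [::].
have := congr1 size eq_xy; rewrite !size_cat /= => size_xy.
have := long v Gv; case: u eq_xy size_xy => [|? ?] /=; last by lia.
case: w => [|? ?]; first by rewrite cats0 => -> _ _.
by move=> _ /=; lia.
Qed.

End Ideals.

Section ZeroRelations.
Variables (V A : finType) (hd tl : A -> V) (G : seq A -> Prop).
Hypothesis string : string_algebra hd tl G.

Lemma zero_relation_matching : exists L : seq (A * A), [/\
  forall x y, (x, y) \in L -> hd x = tl y /\ in_ideal G [:: x; y],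
  {in L &, injective fst}, {in L &, injective snd},
  forall b a1 a2, tl a1 = hd b -> tl a2 = hd b -> a1 != a2 -> b \in map fst L &
  forall a b1 b2, hd b1 = tl a -> hd b2 = tl a -> b1 != b2 -> a \in map snd L].
Proof.
case: string => _ _ deg2 uniserial.
pose In v := [set b | hd b == v]; pose Out v := [set a | tl a == v].
have satv v : exists M,
    saturating_matching (In v) (Out v) (fun b a => in_ideal G [:: b; a]) M.
  apply: exists_saturating_matching; rewrite ?(deg2 v).1 ?(deg2 v).2 //.
  - move=> b a1 a2; rewrite !inE => /eqP hb /eqP ha1 /eqP ha2 /eqP n12.
    case: (classic (in_ideal G [:: b; a1])) => [| n1]; [by left | right].
    by apply: NNPP => n2; apply/n12/((uniserial b).1 a1 a2); split; congruence.
  - move=> a b1 b2; rewrite !inE => /eqP ha /eqP hb1 /eqP hb2 /eqP n12.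
    case: (classic (in_ideal G [:: b1; a])) => [| n1]; [by left | right].
    by apply: NNPP => n2; apply/n12/((uniserial a).2 b1 b2); split; congruence.
have [M satM] := fin_all_exists satv.
have onM v x y : (x, y) \in M v -> [/\ hd x = v, tl y = v & in_ideal G [:: x; y]].
  by have [inMv _ _ _ _] := satM v => /inMv []; rewrite !inE => /eqP -> /eqP ->.
pose L := flatten [seq M v | v <- enum V].
have memL x y : ((x, y) \in L) = ((x, y) \in M (hd x)).
  apply/flatten_mapP/idP => [[v _ xyM] | xyM]; last by exists (hd x); rewrite ?mem_enum.
  by have [-> _ _] := onM _ _ _ xyM.
exists L; split.
- by move=> x y; rewrite memL => /onM [_ -> ?].
- move=> [x y] [x' y']; rewrite !memL /= => xyM xyM' eq_x; subst x'.
  by have [_ injM _ _ _] := satM (hd x); apply: injM.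
- move=> [x y] [x' y']; rewrite !memL /= => xyM xyM' eq_y; subst y'.
  have [_ tly _] := onM _ _ _ xyM; have [_ tly' _] := onM _ _ _ xyM'.
  rewrite -tly in xyM; rewrite -tly' in xyM'.
  by have [_ _ injM _ _] := satM (tl y); apply: injM.
- move=> b a1 a2 ha1 ha2 n12; have [_ _ _ coverIn _] := satM (hd b).
  have := coverIn b a1 a2; rewrite !inE ha1 ha2 eqxx => /(_ isT isT isT n12).
  case/mapP=> [[b' a] baM /= eq_b]; subst b'.
  by apply/mapP; exists (b, a); rewrite ?memL.
- move=> a b1 b2 hb1 hb2 n12; have [_ _ _ _ coverOut] := satM (tl a).
  have := coverOut a b1 b2; rewrite !inE hb1 hb2 eqxx => /(_ isT isT isT n12).
  case/mapP=> [[b a'] baM /= eq_a]; subst a'.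
  by apply/mapP; exists (b, a); rewrite // memL; have [-> _ _] := onM _ _ _ baM.
Qed.

End ZeroRelations.

Section ColoringIdeal.
Variables (V A : finType) (hd tl : A -> V) (c : A -> A) (L : seq (A * A)).
Hypothesis acyclic : no_oriented_cycles hd tl.
Hypothesis deg2 : forall v, #|[set a | hd a == v]| <= 2 /\ #|[set a | tl a == v]| <= 2.
Hypothesis same_color : forall x y, hd x = tl y -> c x = c y <-> (x, y) \in L.
Hypothesis adjL : forall x y, (x, y) \in L -> hd x = tl y.
Hypotheses (fstL : {in L &, injective fst}) (sndL : {in L &, injective snd}).
Hypothesis coverIn :
  forall b a1 a2, tl a1 = hd b -> tl a2 = hd b -> a1 != a2 -> b \in map fst L.
Hypothesis coverOut :
  forall a b1 b2, hd b1 = tl a -> hd b2 = tl a -> b1 != b2 -> a \in map snd L.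
Local Notation Ic := (Ic_gens hd tl c).

Lemma in_Ic_pair x y : in_ideal Ic [:: x; y] <-> (x, y) \in L.
Proof.
rewrite in_ideal_pair; last by case=> [|? [|? []]].
split=> [[xy cxy] | xyL]; first exact/(same_color xy).
by have xy := adjL xyL; split; last exact/(same_color xy).
Qed.

Lemma Ic_at_most_one_out b :
  at_most_one (fun a => tl a = hd b /\ ~ in_ideal Ic [:: b; a]).
Proof.
move=> a1 a2 [h1 n1] [h2 n2]; apply/eqP/negPn/negP => n12.
have /mapP [[b' a] baL /= eq_b] := coverIn h1 h2 n12; subst b'.
have := @card_le2_mem _ _ a1 a2 a (deg2 (hd b)).2.
rewrite !inE h1 h2 (adjL baL) eqxx => /(_ isT isT n12 isT).
by case/orP=> /eqP eq_a; [apply: n1 | apply: n2]; apply/in_Ic_pair; rewrite -eq_a.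
Qed.

Lemma Ic_at_most_one_in a :
  at_most_one (fun b => hd b = tl a /\ ~ in_ideal Ic [:: b; a]).
Proof.
move=> b1 b2 [h1 n1] [h2 n2]; apply/eqP/negPn/negP => n12.
have /mapP [[b a'] baL /= eq_a] := coverOut h1 h2 n12; subst a'.
have := @card_le2_mem _ _ b1 b2 b (deg2 (tl a)).1.
rewrite !inE h1 h2 (adjL baL) eqxx => /(_ isT isT n12 isT).
by case/orP=> /eqP eq_b; [apply: n1 | apply: n2]; apply/in_Ic_pair; rewrite -eq_b.
Qed.

Lemma Ic_gentle : gentle_string_algebra hd tl Ic.
Proof.
have Ic_len2 q : Ic q -> qpath hd tl q /\ size q = 2.
  by case: q => [|x [|y []]] //= [-> _]; rewrite eqxx.
split; [split | | by exists Ic].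
- by move=> q /Ic_len2 [].
- exists #|V|.+1 => p /(qpath_size_le_card acyclic) le_p lt_p.
  by have := leq_trans lt_p le_p; rewrite ltnn.
- exact: deg2.
- by move=> b; split; [apply: Ic_at_most_one_out | apply: Ic_at_most_one_in].
- move=> b; split=> x1 x2 [_ /in_Ic_pair x1L] [_ /in_Ic_pair x2L].
    by have [] := fstL x1L x2L erefl.
  by have [] := sndL x1L x2L erefl.
Qed.

End ColoringIdeal.

Theorem mainTheorem3 (V A : finType) (hd tl : A -> V) (G : seq A -> Prop) :
  string_algebra hd tl G ->
  no_loops hd tl ->
  no_oriented_cycles hd tl ->
  exists (S : finType) (c : A -> S),
    coloring hd tl c /\
    gentle_string_algebra hd tl (Ic_gens hd tl c) /\
    (forall p, qpath hd tl p -> in_ideal (Ic_gens hd tl c) p -> in_ideal G p).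
Proof.
(* The hypothesis [no_loops] is implied by acyclicity, see [acyclic_no_loops]. *)
move=> string _ acyclic; have [_ _ deg2 _] := string.
have [L [relL fstL sndL coverIn coverOut]] := zero_relation_matching string.
have adjL x y (xyL : (x, y) \in L) : hd x = tl y := (relL x y xyL).1.
have [c [col same_color]] := coloring_of_matching acyclic adjL fstL sndL.
exists A, c; split=> //; split.
  exact: (Ic_gentle acyclic deg2 same_color adjL fstL sndL coverIn coverOut).
move=> p _ [u [v [w [-> Icv]]]]; case: v Icv => [|x [|y []]] // [xy cxy].
by apply: in_ideal_infix; have [] := relL x y (proj1 (same_color x y xy) cxy).
Qed.
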